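(* Let $k\ge1$ and $n\ge 2^k-1$ be integers, and set $n_2=2^k-1$, $n_1=n-n_2$. Then in the binary symmetric channel with a single error and one-time feedback (after the first $n_1$ symbols), one can transmit $$M_1(n)=2^{n_1}\left\lfloor\frac{2^{n_2}}{n_1+n_2+1}\right\rfloor$$ messages with a single-error-correcting strategy.
   Context: Binary symmetric channel: alphabet $\{0,1\}$, an error replaces a symbol by the other symbol; ''a single error'' means at most one error in the whole transmission. A strategy with one-time feedback after $n_1$ symbols for messages $m\in[M]$: the first $n_1$ transmitted symbols depend only on $m$; then the encoder learns the $n_1$ received symbols (error-free, instantaneously), and the remaining $n_2$ symbols depend on $m$ and those received symbols. It transmits $M$ messages with a single error if the sets of output sequences reachable from distinct messages with at most one error are pairwise disjoint. *)

From mathcomp Require Import all_boot.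
Set Implicit Arguments. Unset Strict Implicit. Unset Printing Implicit Defensive.

Definition word (n : nat) := {ffun 'I_n -> bool}.

Definition hdist (n : nat) (x y : word n) : nat := #|[pred i | x i != y i]|.

(* A strategy with one-time feedback after n1 symbols for messages in [M]
   (represented by 'I_M): the first n1 symbols depend only on the message;
   the last n2 symbols depend on the message and the n1 received symbols. *)
Record strategy (M n1 n2 : nat) := Strategy {
  enc1 : 'I_M -> word n1;
  enc2 : 'I_M -> word n1 -> word n2 }.

(* Output (y1, y2) is reachable from message m with at most one error
   in the whole transmission (y1 = received first block, which is what the
   encoder sees as feedback). *)
Definition reachable M n1 n2 (S : strategy M n1 n2) (m : 'I_M)
  (y1 : word n1) (y2 : word n2) : Prop :=
  hdist (enc1 S m) y1 + hdist (enc2 S m y1) y2 <= 1.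

Definition transmits_single_error M n1 n2 (S : strategy M n1 n2) : Prop :=
  forall (m m' : 'I_M) (y1 : word n1) (y2 : word n2),
    m != m' -> reachable S m y1 y2 -> reachable S m' y1 y2 -> False.

(** The first block is sent uncoded.  If the single error hits it, at position
    [i] say, the encoder learns [i] from the feedback and the second block is
    then received exactly, so it only has to identify [(i, b)] among the
    [n1 * B] possibilities; otherwise the second block must correct one error.
    Hence it suffices to have [B] words of length [K] with disjoint Hamming
    balls of radius one, plus [n1 * B] further words outside these balls.  As
    a ball has [K + 1] elements, room for the extra words is guaranteed by
    [B * (n1 + K + 1) <= 2 ^ K], and for [K = 2 ^ k - 1] the Hamming code, a
    perfect code with [2 ^ K / (K + 1)] codewords, supplies the centres. *)

From mathcomp Require Import all_boot ssralg zify.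
Set Implicit Arguments. Unset Strict Implicit. Unset Printing Implicit Defensive.

Import GRing.Theory.

Lemma exists_inj_into (P T : finType) (A : {pred T}) :
  #|P| <= #|A| -> exists2 f : P -> T, injective f & forall p, f p \in A.
Proof.
move=> lePA; exists (fun p => enum_val (widen_ord lePA (enum_rank p))).
  move=> p q /enum_val_inj /(congr1 val) eq_pq.
  by apply/(can_inj enum_rankK)/val_inj.
by move=> p; apply: enum_valP.
Qed.

Lemma ord_enum_set (T : finType) (A : {pred T}) n : #|A| = n ->
  exists f : 'I_n -> T,
    [/\ injective f, forall i, f i \in A &
         forall x, x \in A -> exists i, x = f i].
Proof.
move=> <-; exists enum_val; split; [exact: enum_val_inj | exact: enum_valP |].
by move=> x Ax; exists (enum_rank_in Ax x); rewrite enum_rankK_in.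
Qed.

Lemma card_word n : #|{: word n}| = 2 ^ n.
Proof. by rewrite card_ffun card_bool card_ord. Qed.

Section HammingBalls.
Variable n : nat.
Implicit Types (x y : word n) (i : 'I_n) (o : option 'I_n).

Definition flip x i : word n := [ffun j => x j (+) (j == i)].

Definition perturb x o : word n := if o is Some i then flip x i else x.

Lemma flipK i : involutive (flip^~ i).
Proof. by move=> x; apply/ffunP => j; rewrite !ffunE addbK. Qed.

Lemma perturbK o : involutive (perturb^~ o).
Proof. by case: o => [i|] x //=; apply: flipK. Qed.

Lemma flip_diff x i j : (x j != flip x i j) = (j == i).
Proof. by rewrite ffunE; case: (x j); case: (j == i). Qed.

Lemma hdist_xx x : hdist x x = 0.
Proof. by apply: eq_card0 => j; rewrite !inE eqxx. Qed.

Lemma hdist_flip x i : hdist x (flip x i) = 1.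
Proof. by rewrite -(card1 i); apply: eq_card => j; rewrite !inE flip_diff. Qed.

Lemma hdist_eq0 x y : hdist x y = 0 -> x = y.
Proof.
move/card0_eq => xy; apply/ffunP => j.
by have := xy j; rewrite !inE => /negbFE/eqP.
Qed.

Lemma hdist_le1P x y : reflect (exists o, y = perturb x o) (hdist x y <= 1).
Proof.
apply: (iffP idP) => [|[[i|] ->]]; rewrite ?hdist_flip ?hdist_xx //.
case xy: (hdist x y) => [|[|//]] _; first by exists None; rewrite (hdist_eq0 xy).
have [i /= xyi] := mem_card1 xy; exists (Some i); apply/ffunP => j.
by have := xyi j; rewrite !inE ffunE; case: (x j); case: (y j); case: (j == i).
Qed.

Lemma pick_diff_xx x : [pick j | x j != x j] = None.
Proof. by case: pickP => // j; rewrite eqxx. Qed.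

Lemma pick_diff_flip x i : [pick j | x j != flip x i j] = Some i.
Proof.
rewrite (eq_pick (flip_diff x i)).
by case: pickP => [j /eqP -> // | /(_ i)]; rewrite eqxx.
Qed.

Lemma covering_bound (C : {set word n}) :
  (forall y, exists2 c, c \in C & exists o, y = perturb c o) ->
  2 ^ n <= #|C| * n.+1.
Proof.
move=> coverC; pose f (co : word n * option 'I_n) := perturb co.1 co.2.
have -> : #|C| * n.+1 = #|setX C [set: option 'I_n]|.
  by rewrite cardsX cardsT card_option card_ord.
apply: leq_trans (leq_imset_card f _); rewrite -card_word -cardsT.
apply/subset_leq_card/subsetP => y _; have [c Cc [o ->]] := coverC y.
by apply/imsetP; exists (c, o); rewrite ?inE ?Cc.
Qed.

End HammingBalls.

Section HammingCode.
Local Open Scope ring_scope.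
Variables (V : zmodType) (K : nat) (col : 'I_K -> V).
Hypothesis addvv : forall v : V, v + v = 0.
Hypothesis col_inj : injective col.
Hypothesis col_neq0 : forall i, col i != 0.
Hypothesis col_onto : forall v, v != 0 -> exists i, v = col i.

Definition syndrome (x : word K) : V := \sum_(i | x i) col i.

Definition hamming_code : {set word K} := [set x | syndrome x == 0].

Lemma syndrome_flip x i : syndrome (flip x i) = syndrome x + col i.
Proof.
rewrite /syndrome big_mkcond [in RHS]big_mkcond.
rewrite (bigD1 i) //= [in RHS](bigD1 i) //= ffunE eqxx.
have -> : \sum_(j | j != i) (if flip x i j then col j else 0)
        = \sum_(j | j != i) (if x j then col j else 0).
  by apply: eq_bigr => j /negbTE ji; rewrite ffunE ji addbF.
by case: (x i); rewrite /= add0r; [rewrite addrAC addvv add0r | rewrite addrC].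
Qed.

Lemma syndrome_perturb x o :
  syndrome (perturb x o) = syndrome x + oapp col 0 o.
Proof. by case: o => [i|] /=; rewrite ?syndrome_flip ?addr0. Qed.

Lemma oapp_col_inj : injective (oapp col 0).
Proof.
case=> [i|] [j|] //=; first by move/col_inj->.
  by move/eqP; rewrite (negbTE (col_neq0 i)).
by move/esym/eqP; rewrite (negbTE (col_neq0 j)).
Qed.

Lemma hamming_code_packing :
  {in hamming_code &, forall c c' o o', perturb c o = perturb c' o' -> c = c'}.
Proof.
move=> c c'; rewrite !inE => /eqP c0 /eqP c'0 o o' co.
have oo' : o = o'.
  apply: oapp_col_inj.
  by have := congr1 syndrome co; rewrite !syndrome_perturb c0 c'0 !add0r.
by rewrite -(perturbK o c) co oo' perturbK.
Qed.

Lemma hamming_code_covering y :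
  exists2 c, c \in hamming_code & exists o, y = perturb c o.
Proof.
have [y0 | /col_onto [i yi]] := eqVneq (syndrome y) 0.
  by exists y; rewrite ?inE ?y0 //; exists None.
exists (flip y i); first by rewrite inE syndrome_flip yi addvv.
by exists (Some i); rewrite /= flipK.
Qed.

End HammingCode.

Section FeedbackStrategy.
Variables (M n1 K B : nat).
Variable msg : 'I_M -> word n1 * 'I_B.
Variable center : 'I_B -> word K.
Variable spare : 'I_n1 * 'I_B -> word K.
Hypothesis msg_inj : injective msg.
Hypothesis center_packing :
  forall b b' o o', perturb (center b) o = perturb (center b') o' -> b = b'.
Hypothesis spare_inj : injective spare.
Hypothesis spare_outside : forall p b o, spare p != perturb (center b) o.

Definition feedback_strategy : strategy M n1 K :=
  Strategy (fun m => (msg m).1)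
    (fun m y1 => if [pick i | (msg m).1 i != y1 i] is Some i
                 then spare (i, (msg m).2) else center (msg m).2).

Lemma feedback_reachable m y1 y2 : reachable feedback_strategy m y1 y2 ->
  (y1 = (msg m).1 /\ exists o, y2 = perturb (center (msg m).2) o)
  \/ exists i, y1 = flip (msg m).1 i /\ y2 = spare (i, (msg m).2).
Proof.
rewrite /reachable /=; case: (msg m) => a b /= reach.
have /hdist_le1P [[i|] y1E] := leq_trans (leq_addr _ _) reach; subst y1.
  rewrite pick_diff_flip hdist_flip add1n ltnS leqn0 in reach.
  by right; exists i; rewrite (hdist_eq0 (eqP reach)).
rewrite pick_diff_xx hdist_xx add0n in reach.
by left; split=> //; apply/hdist_le1P.
Qed.

Lemma feedback_strategy_transmits : transmits_single_error feedback_strategy.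
Proof.
move=> m m' y1 y2 /eqP neq_mm'.
move=> /feedback_reachable reach /feedback_reachable reach'.
apply: neq_mm'; apply: msg_inj; move: reach reach'.
case: (msg m) => a b; case: (msg m') => a' b' /=.
case=> [[-> [o ->]] | [i [-> ->]]] [[a'E [o' y2E]] | [i' [y1E y2E]]].
- by rewrite a'E (center_packing y2E).
- by have := spare_outside (i', b') b o; rewrite y2E eqxx.
- by have := spare_outside (i, b) b' o'; rewrite y2E eqxx.
by case: (spare_inj y2E) y1E => <- <- /(inv_inj (flipK i)) ->.
Qed.

End FeedbackStrategy.

Lemma strategy_of_code n1 K B (C : {set word K}) :
  {in C &, forall c c' o o', perturb c o = perturb c' o' -> c = c'} ->
  B <= #|C| -> B * (n1 + K + 1) <= 2 ^ K ->
  exists S : strategy (2 ^ n1 * B) n1 K, transmits_single_error S.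
Proof.
move=> packC leBC leB2K.
have [center center_inj centerC] :
    exists2 f : 'I_B -> word K, injective f & forall b, f b \in C.
  by apply: exists_inj_into; rewrite card_ord.
pose balls := [set perturb (center bo.1) bo.2 | bo : 'I_B * option 'I_K].
have card_balls : #|balls| <= B * K.+1.
  apply: leq_trans (leq_imset_card _ _) _.
  by rewrite card_prod card_option !card_ord.
have [spare spare_inj spare_out] :
    exists2 f : 'I_n1 * 'I_B -> word K, injective f & forall p, f p \in ~: balls.
  apply: exists_inj_into; rewrite card_prod !card_ord.
  by have := cardsC balls; rewrite card_word; lia.
have [msg msg_inj _] : exists2 f : 'I_(2 ^ n1 * B) -> word n1 * 'I_B,
    injective f & forall m, f m \in predT.
  by apply: exists_inj_into; rewrite card_ord card_prod card_word card_ord.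
exists (feedback_strategy msg center spare).
apply: feedback_strategy_transmits => //.
  by move=> b b' o o' /packC; rewrite !centerC => /(_ isT isT)/center_inj.
move=> p b o; have := spare_out p; rewrite inE; apply: contraNneq => ->.
by apply/imsetP; exists (b, o).
Qed.

Theorem corollary1 (k n : nat) :
  1 <= k -> 2 ^ k - 1 <= n ->
  exists S : strategy (2 ^ (n - (2 ^ k - 1)) *
                       (2 ^ (2 ^ k - 1) %/ ((n - (2 ^ k - 1)) + (2 ^ k - 1) + 1)))
                      (n - (2 ^ k - 1)) (2 ^ k - 1),
    transmits_single_error S.
Proof.
move=> _ _; set n1 := n - _; set K := 2 ^ k - 1.
have [col [col_inj col_neq0 col_onto]] :
    exists col : 'I_K -> {ffun 'I_k -> bool},
      [/\ injective col, forall i, col i != 0%R &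
           forall v, v != 0%R -> exists i, v = col i].
  by apply: ord_enum_set; rewrite cardC1 card_ffun card_bool card_ord /K subn1.
have addvv (v : {ffun 'I_k -> bool}) : (v + v = 0)%R.
  by apply/ffunP => i; rewrite !ffunE; case: (v i).
have packC := hamming_code_packing addvv col_inj col_neq0.
have coverC := covering_bound (hamming_code_covering addvv col_onto).
apply: strategy_of_code packC _ (leq_divM _ _).
rewrite -(leq_pmul2r (ltn0Sn K)); apply: leq_trans coverC.
by apply: leq_trans (leq_divM _ (n1 + K + 1)); rewrite leq_mul2l; lia.
Qed.
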